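(* Let $t\in[0,1]$, $x\in(0,1]$, and $y$ with $1-e^{-t}\le y<1$. Then \[ (1-yx)\,\frac{\log\big(1-x+x\,\frac{e^{-2xt}}{1-yx}\big)}{x\big(1-\frac{e^{-2xt}}{1-yx}\big)}\ \le\ (1-y)\,\frac{\log\big(\frac{e^{-2t}}{1-y}\big)}{1-\frac{e^{-2t}}{1-y}}, \] with equality at $x=1$. Expressions of the form $\log(1-x+xQ)/(1-Q)$ are understood at $Q=1$ as their limit $-x$. *)

From Stdlib Require Import Reals.
Open Scope R_scope.

Definition G (x Q : R) : R :=
  if Req_EM_T Q 1 then - x else ln (1 - x + x * Q) / (1 - Q).

Definition lhs (t x y : R) : R :=
  (1 - y * x) * (G x (exp (-2 * x * t) / (1 - y * x)) / x).

(* Right-hand side: (1 - y) * log(Q) / (1 - Q), Q = e^{-2t}/(1-y);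
   this is the form log(1 - 1 + 1*Q)/(1 - Q), i.e. G 1 Q. *)
Definition rhs (t y : R) : R :=
  (1 - y) * G 1 (exp (-2 * t) / (1 - y)).

From Stdlib Require Import Reals Lra Psatz.
From Coquelicot Require Import Coquelicot.
Open Scope R_scope.

(* Writing [exprel z = (e^z - 1)/z], one has [G x Q / x = -1 / exprel (ln (1 - x + x Q))],
   so with [a = 1 - y x], [c = 1 - y], [p = 1 - x + x e^(-2xt)/a] and [q = e^(-2t)/c] the
   inequality reads [c exprel (ln p) <= a exprel (ln q)].  As [m exprel (ln p)] is the
   logarithmic mean of [m p] and [m], which increases in both arguments, this holds when
   [c p <= a q].  Otherwise [p q <= 1], and [exprel z = e^(z/2) sinh(z/2)/(z/2)] with
   [sinh s / s] even and increasing in [|s|] shows that [c^2 p <= a^2 q] suffices.  These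
   are polynomial inequalities in [x], [c] and [u = e^(-t)], given [e^(-xt) <= 1 - x + x u]
   (convexity) and [c <= u] (the hypothesis on [y]). *)

Lemma exp_le_exp x y : x <= y -> exp x <= exp y.
Proof.
intros Hxy; destruct (Rle_lt_or_eq_dec _ _ Hxy) as [Hlt | ->]; [|lra].
left; exact (exp_increasing _ _ Hlt).
Qed.

Lemma exp_scale_le l z : 0 <= l <= 1 -> exp (l * z) <= 1 - l + l * exp z.
Proof.
intros Hl.
assert (Ez : exp z = exp (l * z) * exp (z - l * z)) by (rewrite <- exp_plus; f_equal; ring).
assert (E0 : 1 = exp (l * z) * exp (- (l * z))) by (rewrite <- exp_plus, <- exp_0; f_equal; ring).
pose proof (exp_ineq1_le (z - l * z)); pose proof (exp_ineq1_le (- (l * z))).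
pose proof (exp_pos (l * z)).
(* the tangent line at [l z] lies below [exp] at both [0] and [z] *)
assert (exp (l * z) * (1 + (z - l * z)) <= exp z) by (rewrite Ez; apply Rmult_le_compat_l; lra).
assert (exp (l * z) * (1 - l * z) <= 1) by (rewrite E0 at 2; apply Rmult_le_compat_l; lra).
nra.
Qed.

Lemma le_of_derive_nonneg (f df : R -> R) p q : p <= q ->
  (forall s, p <= s <= q -> is_derive f s (df s)) ->
  (forall s, p <= s <= q -> 0 <= df s) -> f p <= f q.
Proof.
intros Hpq Hd Hpos; destruct (Req_dec p q) as [<- | Hne]; [lra|].
destruct (MVT_cor2 f df p q) as [s [Hs Hs']]; [lra| |].
- intros s Hs; apply is_derive_Reals, Hd; lra.
- assert (0 <= df s) by (apply Hpos; lra). nra.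
Qed.

Lemma sinh_nonneg s : 0 <= s -> 0 <= sinh s.
Proof.
intros Hs; rewrite <- sinh_0; destruct (Req_dec s 0) as [-> | Hs0]; [lra|].
left; apply sinh_lt; lra.
Qed.

Lemma cosh_le r s : 0 <= r <= s -> cosh r <= cosh s.
Proof.
intros Hrs; apply (le_of_derive_nonneg cosh sinh); [lra| |].
- intros w _; unfold cosh, sinh; auto_derive; [exact I | field].
- intros w Hw; apply sinh_nonneg; lra.
Qed.

Lemma sinh_ge_id s : 0 <= s -> s <= sinh s.
Proof.
intros Hs.
enough (sinh 0 - 0 <= sinh s - s) by (rewrite sinh_0 in *; lra).
apply (le_of_derive_nonneg (fun w => sinh w - w) (fun w => cosh w - 1)); [lra| |].
- intros w _; unfold sinh, cosh; auto_derive; [exact I | field].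
- intros w Hw; rewrite <- cosh_0; enough (cosh 0 <= cosh w) by lra; apply cosh_le; lra.
Qed.

Lemma sinh_scale_le l s : 0 <= l <= 1 -> 0 <= s -> sinh (l * s) <= l * sinh s.
Proof.
intros Hl Hs.
enough (l * sinh 0 - sinh (l * 0) <= l * sinh s - sinh (l * s))
  by (rewrite Rmult_0_r, sinh_0 in *; lra).
apply (le_of_derive_nonneg (fun w => l * sinh w - sinh (l * w))
         (fun w => l * (cosh w - cosh (l * w)))); [lra| |].
- intros w _; unfold sinh, cosh; auto_derive; [exact I | field].
- intros w Hw; apply Rmult_le_pos; [lra|].
  enough (cosh (l * w) <= cosh w) by lra; apply cosh_le; nra.
Qed.

Definition sinhc (s : R) : R := if Req_EM_T s 0 then 1 else sinh s / s.

Definition exprel (z : R) : R := if Req_EM_T z 0 then 1 else (exp z - 1) / z.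

Lemma mul_sinhc s : s * sinhc s = sinh s.
Proof.
unfold sinhc; destruct (Req_EM_T s 0) as [-> | Hs]; [rewrite sinh_0; ring | field; exact Hs].
Qed.

Lemma sinhc_opp s : sinhc (- s) = sinhc s.
Proof.
unfold sinhc, sinh; destruct (Req_EM_T (- s) 0), (Req_EM_T s 0); try lra.
rewrite Ropp_involutive; field; lra.
Qed.

Lemma sinhc_le s s' : 0 <= s <= s' -> sinhc s <= sinhc s'.
Proof.
intros Hss'; destruct (Req_dec s' 0) as [Hs' | Hs'].
{ replace s with s' by lra; lra. }
assert (Hs'pos : 0 < s') by lra.
destruct (Req_dec s 0) as [-> | Hs].
- unfold sinhc at 1; destruct (Req_EM_T 0 0); [|lra].
  apply (Rmult_le_reg_l s'); [lra|]; rewrite mul_sinhc, Rmult_1_r.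
  apply sinh_ge_id; lra.
- apply (Rmult_le_reg_l s); [lra|]; rewrite mul_sinhc.
  assert (Hl : 0 <= s / s' <= 1).
  { split; [apply Rdiv_le_0_compat; lra|].
    apply (Rmult_le_reg_r s'); [lra|]; field_simplify; lra. }
  pose proof (sinh_scale_le (s / s') s' Hl ltac:(lra)) as Hscale.
  replace (s / s' * s') with s in Hscale by (field; lra).
  rewrite <- (mul_sinhc s') in Hscale.
  replace (s / s' * (s' * sinhc s')) with (s * sinhc s') in Hscale by (field; lra).
  exact Hscale.
Qed.

Lemma sinhc_le_abs s s' : Rabs s <= Rabs s' -> sinhc s <= sinhc s'.
Proof.
assert (Habs : forall w, sinhc w = sinhc (Rabs w)).
{ intros w; unfold Rabs; destruct (Rcase_abs w); [rewrite sinhc_opp|]; reflexivity. }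
intros Hss'; rewrite (Habs s), (Habs s'); apply sinhc_le.
split; [apply Rabs_pos | exact Hss'].
Qed.

Lemma sinhc_ge1 s : 1 <= sinhc s.
Proof.
replace 1 with (sinhc 0) by (unfold sinhc; destruct (Req_EM_T 0 0); lra).
apply sinhc_le_abs; rewrite Rabs_R0; apply Rabs_pos.
Qed.

Lemma mul_exprel z : z * exprel z = exp z - 1.
Proof.
unfold exprel; destruct (Req_EM_T z 0) as [-> | Hz]; [rewrite exp_0; ring | field; exact Hz].
Qed.

Lemma exprel_sinhc z : exprel z = exp (z / 2) * sinhc (z / 2).
Proof.
destruct (Req_dec z 0) as [-> | Hz].
- unfold exprel, sinhc; replace (0 / 2) with 0 by field.
  destruct (Req_EM_T 0 0); [rewrite exp_0; ring | lra].
- apply (Rmult_eq_reg_l z); [|exact Hz]; rewrite mul_exprel.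
  replace (z * (exp (z / 2) * sinhc (z / 2))) with (2 * exp (z / 2) * (z / 2 * sinhc (z / 2)))
    by field.
  rewrite mul_sinhc; unfold sinh.
  replace z with (z / 2 + z / 2) at 1 by field; rewrite exp_plus.
  replace (exp (- (z / 2))) with (/ exp (z / 2)) by (rewrite exp_Ropp; reflexivity).
  field; apply Rgt_not_eq, exp_pos.
Qed.

Lemma exprel_pos z : 0 < exprel z.
Proof.
rewrite exprel_sinhc; pose proof (exp_pos (z / 2)); pose proof (sinhc_ge1 (z / 2)); nra.
Qed.

Lemma exprel_opp z : exprel z = exp z * exprel (- z).
Proof.
unfold exprel; destruct (Req_EM_T z 0) as [Hz | Hz], (Req_EM_T (- z) 0); try lra.
- rewrite Hz, exp_0; ring.
- rewrite exp_Ropp; pose proof (exp_pos z); field; lra.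
Qed.

Lemma exprel_le1 z : z <= 0 -> exprel z <= 1.
Proof.
intros Hz; destruct (Req_dec z 0) as [-> | Hz0].
- unfold exprel; destruct (Req_EM_T 0 0); lra.
- apply (Rmult_le_reg_l (- z)); [lra|].
  replace (- z * exprel z) with (- (z * exprel z)) by ring; rewrite mul_exprel.
  pose proof (exp_ineq1_le z); lra.
Qed.

Lemma exprel_ge1 z : 0 <= z -> 1 <= exprel z.
Proof.
intros Hz; destruct (Req_dec z 0) as [-> | Hz0].
- unfold exprel; destruct (Req_EM_T 0 0); lra.
- apply (Rmult_le_reg_l z); [lra|]; rewrite mul_exprel.
  pose proof (exp_ineq1_le z); lra.
Qed.

Lemma exprel_scale l z : 0 < l <= 1 -> z * exprel (l * z) <= z * exprel z.
Proof.
intros Hl; apply (Rmult_le_reg_l l); [lra|].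
replace (l * (z * exprel (l * z))) with (l * z * exprel (l * z)) by ring.
rewrite !mul_exprel.
pose proof (exp_scale_le l z ltac:(lra)); lra.
Qed.

Lemma exprel_le z z' : z <= z' -> exprel z <= exprel z'.
Proof.
intros Hzz'.
destruct (Rlt_or_le 0 z) as [Hz | Hz]; [|destruct (Rlt_or_le z' 0) as [Hz' | Hz']].
- assert (Hl : 0 < z / z' <= 1).
  { split; [apply Rdiv_lt_0_compat; lra|].
    apply (Rmult_le_reg_r z'); [lra|]; field_simplify; lra. }
  pose proof (exprel_scale (z / z') z' Hl) as Hscale.
  replace (z / z' * z') with z in Hscale by (field; lra).
  apply (Rmult_le_reg_l z'); lra.
- assert (Hl : 0 < z' / z <= 1).
  { split; [replace (z' / z) with (- z' / - z) by (field; lra); apply Rdiv_lt_0_compat; lra|].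
    apply (Rmult_le_reg_r (- z)); [lra|].
    replace (z' / z * - z) with (- z') by (field; lra); lra. }
  pose proof (exprel_scale (z' / z) z Hl) as Hscale.
  replace (z' / z * z) with z' in Hscale by (field; lra).
  apply (Rmult_le_reg_l (- z)); lra.
- pose proof (exprel_le1 z Hz); pose proof (exprel_ge1 z' Hz'); lra.
Qed.

Lemma scaled_exprel_le_of_exp c a z z1 : 0 < c <= a -> c * exp z <= a * exp z1 ->
  c * exprel z <= a * exprel z1.
Proof.
intros Hca Hexp; destruct (Rle_or_lt z z1) as [Hz | Hz].
- pose proof (exprel_le z z1 Hz); pose proof (exprel_pos z); nra.
- rewrite (exprel_opp z), (exprel_opp z1).
  pose proof (exprel_le (- z) (- z1) ltac:(lra)); pose proof (exprel_pos (- z1)).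
  pose proof (exp_pos z).
  apply Rle_trans with (c * exp z * exprel (- z1)); [|nra].
  rewrite <- Rmult_assoc; apply Rmult_le_compat_l; nra.
Qed.

Lemma scaled_exprel_le_of_sq c a z z1 : 0 < c <= a -> c ^ 2 * exp z <= a ^ 2 * exp z1 ->
  z + z1 <= 0 -> c * exprel z <= a * exprel z1.
Proof.
intros Hca Hsq Hsum; destruct (Rle_or_lt z z1) as [Hz | Hz].
- apply scaled_exprel_le_of_exp; [exact Hca|].
  pose proof (exp_le_exp z z1 Hz); pose proof (exp_pos z); nra.
- assert (Hhalf : forall w, exp w = exp (w / 2) * exp (w / 2))
    by (intros w; rewrite <- exp_plus; f_equal; field).
  assert (Hroot : c * exp (z / 2) <= a * exp (z1 / 2)).
  { rewrite (Hhalf z), (Hhalf z1) in Hsq.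
    pose proof (exp_pos (z / 2)); pose proof (exp_pos (z1 / 2)).
    apply Rsqr_incr_0_var; [unfold Rsqr; nra | nra]. }
  assert (Hsinhc : sinhc (z / 2) <= sinhc (z1 / 2)).
  { apply sinhc_le_abs; unfold Rabs.
    destruct (Rcase_abs (z / 2)), (Rcase_abs (z1 / 2)); lra. }
  rewrite !exprel_sinhc.
  pose proof (exp_pos (z / 2)); pose proof (sinhc_ge1 (z1 / 2)).
  apply Rle_trans with (c * exp (z / 2) * sinhc (z1 / 2)); [|nra].
  rewrite <- Rmult_assoc; apply Rmult_le_compat_l; nra.
Qed.

Lemma scaled_exprel_ln_le c a p q : 0 < c <= a -> 0 < p -> 0 < q ->
  c ^ 2 * p <= a ^ 2 * q -> c * p <= a * q \/ p * q <= 1 ->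
  c * exprel (ln p) <= a * exprel (ln q).
Proof.
intros Hca Hp Hq Hsq [Hlin | Hprod].
- apply scaled_exprel_le_of_exp; [exact Hca|]; rewrite !exp_ln; assumption.
- apply scaled_exprel_le_of_sq; [exact Hca | rewrite !exp_ln; assumption |].
  destruct (Rle_or_lt (ln p + ln q) 0) as [Hle | Hgt]; [exact Hle|].
  pose proof (exp_increasing _ _ Hgt) as Hcontra.
  rewrite exp_0, exp_plus, !exp_ln in Hcontra by assumption; lra.
Qed.

Lemma G_div_eq x Q : 0 < x <= 1 -> 0 < Q -> G x Q / x = - / exprel (ln (1 - x + x * Q)).
Proof.
intros Hx HQ; unfold G; destruct (Req_EM_T Q 1) as [-> | HQ1].
- replace (1 - x + x * 1) with 1 by ring; rewrite ln_1.
  unfold exprel; destruct (Req_EM_T 0 0); [field; lra | lra].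
- set (z := ln (1 - x + x * Q)).
  assert (HzE : z * exprel z = x * (Q - 1)) by (unfold z; rewrite mul_exprel, exp_ln; nra).
  pose proof (exprel_pos z).
  assert (Hz : z <> 0) by (intros Hz; rewrite Hz in HzE; apply HQ1; nra).
  replace (1 - Q) with (- (z * exprel z) / x) by (rewrite HzE; field; lra).
  field; repeat split; lra.
Qed.

Section AlgebraicBounds.

Variables x c u b a N : R.
Hypotheses (Hx : 0 < x <= 1) (Hc : 0 < c) (Hcu : c <= u) (Hu : u <= 1)
  (Hb : 0 < b) (Hbw : b <= (1 - x + x * u) ^ 2).
Hypotheses (Ha : a = 1 - x + x * c) (HN : N = (1 - x) * a + x * b).

Lemma c_le_a : c <= a.
Proof. rewrite Ha; nra. Qed.

Lemma sq_mul_b_le : c ^ 2 * b <= a ^ 2 * u ^ 2.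
Proof.
assert (Hw : 0 <= c * (1 - x + x * u)) by (apply Rmult_le_pos; nra).
apply Rle_trans with ((c * (1 - x + x * u)) ^ 2).
- replace ((c * (1 - x + x * u)) ^ 2) with (c ^ 2 * (1 - x + x * u) ^ 2) by ring.
  apply Rmult_le_compat_l; [nra | lra].
- replace (a ^ 2 * u ^ 2) with ((a * u) ^ 2) by ring.
  apply pow_incr; split; [exact Hw | rewrite Ha; nra].
Qed.

Lemma cube_mul_N_le : c ^ 3 * N <= a ^ 3 * u ^ 2.
Proof.
pose proof sq_mul_b_le; pose proof c_le_a.
assert (c ^ 3 * a <= a ^ 2 * u ^ 2).
{ assert (c ^ 2 <= u ^ 2) by (apply pow_incr; lra).
  replace (c ^ 3 * a) with (c ^ 2 * (c * a)) by ring.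
  replace (a ^ 2 * u ^ 2) with (u ^ 2 * (a * a)) by ring.
  apply Rmult_le_compat; nra. }
replace (a ^ 3 * u ^ 2) with ((1 - x) * (a ^ 2 * u ^ 2) + x * (c * (a ^ 2 * u ^ 2)))
  by (rewrite Ha; ring).
assert (c ^ 3 * b <= c * (a ^ 2 * u ^ 2)) by nra.
rewrite HN; nra.
Qed.

Lemma sq_mul_N_le : c ^ 2 <= a * u ^ 2 -> c ^ 2 * N <= a ^ 2 * u ^ 2.
Proof.
intros Hca; pose proof sq_mul_b_le; pose proof c_le_a.
assert (c ^ 2 * a <= a ^ 2 * u ^ 2) by nra.
replace (a ^ 2 * u ^ 2) with ((1 - x) * (a ^ 2 * u ^ 2) + x * (a ^ 2 * u ^ 2)) by ring.
rewrite HN; nra.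
Qed.

Lemma mul_N_le : a * u ^ 2 < c ^ 2 -> N * u ^ 2 <= a * c.
Proof.
intros Hca; pose proof c_le_a.
assert (u ^ 2 < c) by nra.
assert (b <= a).
{ assert ((1 - x + x * u) ^ 2 <= 1 - x + x * u ^ 2).
  { assert (0 <= x * (1 - x) * (1 - u) ^ 2) by (apply Rmult_le_pos; [nra | apply pow2_ge_0]).
    nra. }
  rewrite Ha; nra. }
assert (a * u ^ 2 <= a * c) by nra.
assert (b * u ^ 2 <= a * c) by nra.
replace (a * c) with ((1 - x) * (a * c) + x * (a * c)) by ring.
rewrite HN; nra.
Qed.

Lemma sq_weighted_le : c ^ 2 * (N / a) <= a ^ 2 * (u ^ 2 / c).
Proof.
pose proof c_le_a; pose proof cube_mul_N_le.
apply (Rmult_le_reg_r (a * c)); [nra|].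
replace (c ^ 2 * (N / a) * (a * c)) with (c ^ 3 * N) by (field; lra).
replace (a ^ 2 * (u ^ 2 / c) * (a * c)) with (a ^ 3 * u ^ 2) by (field; lra).
assumption.
Qed.

Lemma weighted_le_or_prod_le1 : c * (N / a) <= a * (u ^ 2 / c) \/ N / a * (u ^ 2 / c) <= 1.
Proof.
pose proof c_le_a.
destruct (Rle_or_lt (c ^ 2) (a * u ^ 2)) as [Hle | Hlt]; [left | right].
- pose proof (sq_mul_N_le Hle).
  apply (Rmult_le_reg_r (a * c)); [nra|].
  replace (c * (N / a) * (a * c)) with (c ^ 2 * N) by (field; lra).
  replace (a * (u ^ 2 / c) * (a * c)) with (a ^ 2 * u ^ 2) by (field; lra).
  assumption.
- pose proof (mul_N_le Hlt).
  apply (Rmult_le_reg_r (a * c)); [nra|].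
  replace (N / a * (u ^ 2 / c) * (a * c)) with (N * u ^ 2) by (field; lra).
  lra.
Qed.

End AlgebraicBounds.

Lemma exp_scale_sq_le l t : 0 <= l <= 1 -> exp (-2 * l * t) <= (1 - l + l * exp (- t)) ^ 2.
Proof.
intros Hl; replace (-2 * l * t) with (l * - t + l * - t) by ring.
rewrite exp_plus, <- Rsqr_pow2; apply Rsqr_incr_1; [apply exp_scale_le; lra | ..].
- left; apply exp_pos.
- pose proof (exp_pos (- t)); nra.
Qed.

Lemma opp_div_le_of_mul_le a c e e' : 0 < e -> 0 < e' -> c * e <= a * e' ->
  a * - / e <= c * - / e'.
Proof.
intros He He' Hce; apply (Rmult_le_reg_r (e * e')); [nra|].
replace (a * - / e * (e * e')) with (- (a * e')) by (field; lra).
replace (c * - / e' * (e * e')) with (- (c * e)) by (field; lra).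
lra.
Qed.

Theorem mainTheorem14 (t x y : R) :
  0 <= t <= 1 -> 0 < x <= 1 -> 1 - exp (- t) <= y < 1 ->
  lhs t x y <= rhs t y /\ lhs t 1 y = rhs t y.
Proof.
intros Ht Hx Hy; split.
2: { unfold lhs, rhs; replace (-2 * 1 * t) with (-2 * t) by ring.
     replace (y * 1) with y by ring; unfold Rdiv; rewrite Rinv_1, Rmult_1_r; reflexivity. }
set (u := exp (- t)); set (c := 1 - y); set (a := 1 - y * x); set (b := exp (-2 * x * t)).
set (N := (1 - x) * a + x * b).
assert (Hc : 0 < c) by (unfold c; lra).
assert (Hcu : c <= u) by (unfold c, u; lra).
assert (Hu : u <= 1) by (unfold u; rewrite <- exp_0; apply exp_le_exp; lra).
assert (Hb : 0 < b) by apply exp_pos.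
assert (Hbw : b <= (1 - x + x * u) ^ 2) by (apply exp_scale_sq_le; lra).
assert (Ha : a = 1 - x + x * c) by (unfold a, c; ring).
assert (Hca : 0 < c <= a) by (split; [exact Hc | apply (c_le_a x c u a); assumption]).
assert (Hlhs : lhs t x y = a * - / exprel (ln (N / a))).
{ unfold lhs; fold a b; rewrite G_div_eq by (try apply Rdiv_lt_0_compat; lra).
  replace (1 - x + x * (b / a)) with (N / a) by (unfold N; field; lra); reflexivity. }
assert (Hrhs : rhs t y = c * - / exprel (ln (u ^ 2 / c))).
{ unfold rhs; fold c; replace (exp (-2 * t)) with (u ^ 2) by (unfold u; simpl;
    rewrite Rmult_1_r, <- exp_plus; f_equal; ring).
  rewrite <- (Rdiv_1_r (G 1 _)), G_div_eq by (try apply Rdiv_lt_0_compat; nra).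
  replace (1 - 1 + 1 * (u ^ 2 / c)) with (u ^ 2 / c) by ring; reflexivity. }
rewrite Hlhs, Hrhs; apply opp_div_le_of_mul_le; try apply exprel_pos.
apply scaled_exprel_ln_le; [exact Hca | apply Rdiv_lt_0_compat; unfold N; nra |
  apply Rdiv_lt_0_compat; nra | |].
- apply (sq_weighted_le x c u b a N); easy.
- apply (weighted_le_or_prod_le1 x c u b a N); easy.
Qed.
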